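(* Let $\mathcal{A}$ and $\mathcal{B}$ be regular languages, let $\mathcal{A}'=\{\otimes(a_1,a_2)\mid a_1,a_2\in\mathcal{A},\ |a_1|=|a_2|\}$, and let $\mathcal{B}'$ be any subset of $\otimes(\mathcal{B},\mathcal{B})=\{\otimes(b_1,b_2)\mid b_1,b_2\in\mathcal{B}\}$ which is a regular language. Let $\Lambda$ be any finite alphabet. Then $$\{\otimes(a_1b_1,\,a_2xb_2),\ \otimes(a_1yb_1,\,a_2b_2)\mid \otimes(a_1,a_2)\in\mathcal{A}',\ \otimes(b_1,b_2)\in\mathcal{B}',\ x,y\in\Lambda\}$$ is a regular language.
   Context: Convolution: for words $w_1,\dots,w_k$ over a finite alphabet and a padding symbol $\diamond$ not in the alphabet, $\otimes(w_1,\dots,w_k)$ is the word of length $\max_i|w_i|$ whose $p$-th letter is the column $(\lambda_1,\dots,\lambda_k)^T$, where $\lambda_r$ is the $p$-th letter of $w_r$ if $p\le|w_r|$ and $\diamond$ otherwise. Juxtaposition such as $a_1b_1$ denotes concatenation of words. *)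

From mathcomp Require Import all_boot.
Set Implicit Arguments. Unset Strict Implicit. Unset Printing Implicit Defensive.

Record dfa (X : finType) := DFA {
  dfa_state : finType;
  dfa_start : dfa_state;
  dfa_final : {set dfa_state};
  dfa_trans : dfa_state -> X -> dfa_state }.

Definition dfa_accept (X : finType) (M : dfa X) (w : seq X) : bool :=
  foldl (@dfa_trans X M) (dfa_start M) w \in dfa_final M.

Definition regular (X : finType) (L : seq X -> Prop) : Prop :=
  exists M : dfa X, forall w, L w <-> dfa_accept M w.

(* Convolution of two words; the padding symbol is None (not in the alphabet). *)
Definition conv2 (T : Type) (w1 w2 : seq T) : seq (option T * option T) :=
  [seq (nth None (map Some w1) i, nth None (map Some w2) i)
  | i <- iota 0 (maxn (size w1) (size w2))].

Definition conv_same_length (T : Type) (A : seq T -> Prop)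
  : seq (option T * option T) -> Prop :=
  fun w => exists a1 a2, A a1 /\ A a2 /\ size a1 = size a2 /\ w = conv2 a1 a2.

(* Since |a1| = |a2|, conv(a1 b1, a2 x b2) = conv(a1, a2) conv(b1, x b2), and
   similarly when y is inserted into the first track, so the language is the
   concatenation of A' with the languages of the words conv(b1, x b2) and
   conv(y b1, b2), where x, y are in Lambda and conv(b1, b2) is in B'.  A' is
   regular: its letters carry no padding and its two projections lie in A.  A
   word v is of the form conv(b1, x b2) iff it is a convolution, its first
   letter has second component in Lambda, and shifting its second track one
   step to the left (a transducer with a one-letter delay) and erasing the
   trailing padding letter gives conv(b1, b2).  Swapping the tracks reduces the
   insertion into the first track to this case. *)

From mathcomp Require Import all_boot.
Set Implicit Arguments. Unset Strict Implicit. Unset Printing Implicit Defensive.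

Definition shift_pairs (X Y : Type) (h : X -> X -> Y) (z : X) (w : seq X) : seq Y :=
  if w is a :: w' then pairmap h a (rcons w' z) else [::].

Section RegularClosure.
Variable X : finType.
Implicit Types (L : seq X -> Prop) (M : dfa X) (w : seq X).

Lemma eq_regular L1 L2 : (forall w, L1 w <-> L2 w) -> regular L1 -> regular L2.
Proof. by move=> L12 [M LM]; exists M => w; apply: iff_trans (LM w); apply: iff_sym. Qed.

Definition prod_dfa M1 M2 (op : bool -> bool -> bool) : dfa X :=
  @DFA X (dfa_state M1 * dfa_state M2)%type (dfa_start M1, dfa_start M2)
    [set q | op (q.1 \in dfa_final M1) (q.2 \in dfa_final M2)]
    (fun q a => (dfa_trans q.1 a, dfa_trans q.2 a)).

Lemma prod_dfa_accept M1 M2 op w :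
  dfa_accept (prod_dfa M1 M2 op) w = op (dfa_accept M1 w) (dfa_accept M2 w).
Proof.
rewrite /dfa_accept inE /=.
by elim: w (dfa_start M1) (dfa_start M2) => //= a w IHw q1 q2; rewrite IHw.
Qed.

Lemma regular_and L1 L2 :
  regular L1 -> regular L2 -> regular (fun w => L1 w /\ L2 w).
Proof.
move=> [M1 LM1] [M2 LM2]; exists (prod_dfa M1 M2 andb) => w.
rewrite prod_dfa_accept.
by split=> [[/LM1 -> /LM2 ->]|/andP[/LM1 ? /LM2 ?]].
Qed.

Lemma regular_or L1 L2 :
  regular L1 -> regular L2 -> regular (fun w => L1 w \/ L2 w).
Proof.
move=> [M1 LM1] [M2 LM2]; exists (prod_dfa M1 M2 orb) => w.
rewrite prod_dfa_accept.
by split=> [[/LM1 ->|/LM2 ->]|/orP[/LM1|/LM2]]; rewrite ?orbT; auto.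
Qed.

Definition pmap_dfa (Y : finType) (f : X -> option Y) (M : dfa Y) : dfa X :=
  @DFA X (dfa_state M) (dfa_start M) (dfa_final M)
    (fun q a => oapp (dfa_trans q) q (f a)).

Lemma pmap_dfa_accept (Y : finType) (f : X -> option Y) (M : dfa Y) w :
  dfa_accept (pmap_dfa f M) w = dfa_accept M (pmap f w).
Proof.
rewrite /dfa_accept /=.
by elim: w (dfa_start M) => //= a w IHw q; case: (f a) => [b|] /=; rewrite IHw.
Qed.

Lemma regular_pmap (Y : finType) (f : X -> option Y) (L : seq Y -> Prop) :
  regular L -> regular (fun w => L (pmap f w)).
Proof. by move=> [M LM]; exists (pmap_dfa f M) => w; rewrite pmap_dfa_accept. Qed.

Lemma regular_map (Y : finType) (f : X -> Y) (L : seq Y -> Prop) :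
  regular L -> regular (fun w => L (map f w)).
Proof.
move/(regular_pmap (Some \o f)); apply: eq_regular => w.
by rewrite (_ : pmap _ w = map f w) //; elim: w => //= a w ->.
Qed.

Lemma regular_filter (p : pred X) (L : seq X -> Prop) :
  regular L -> regular (fun w => L (filter p w)).
Proof.
move/(regular_pmap (fun a => if p a then Some a else None)); apply: eq_regular => w.
by rewrite (_ : pmap _ w = filter p w) //; elim: w => //= a w ->; case: (p a).
Qed.

Lemma regular_all (p : pred X) : regular (fun w => all p w).
Proof.
exists (@DFA X bool true [set true] (fun b a => b && p a)) => w.
have run_all b : foldl (fun b a => b && p a) b w = b && all p w.
  by elim: w b => [|a w IHw] b /=; rewrite ?andbT // IHw andbA.
by rewrite /dfa_accept inE /= run_all; case: (all p w).
Qed.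

Lemma regular_ohead (p : pred X) : regular (fun w => oapp p false (ohead w)).
Proof.
pose read_head (o : option bool) a := if o is None then Some (p a) else o.
exists (@DFA X (option bool) None [set Some true] read_head) => w.
have run_some c w' : foldl read_head (Some c) w' = Some c by elim: w'.
by case: w => [|a w]; rewrite /dfa_accept /= ?run_some inE //; case: (p a).
Qed.

Section Concatenation.
Variables M1 M2 : dfa X.
Local Notation Q1 := (dfa_state M1).
Local Notation Q2 := (dfa_state M2).
Local Notation run2 := (foldl (@dfa_trans X M2) (dfa_start M2)).

Definition cat_restart (q1 : Q1) : {set Q2} :=
  if q1 \in dfa_final M1 then [set dfa_start M2] else set0.

Lemma mem_cat_restart q1 q2 :
  (q2 \in cat_restart q1) = (q1 \in dfa_final M1) && (q2 == dfa_start M2).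
Proof. by rewrite /cat_restart; case: ifP; rewrite ?inE. Qed.

Definition cat_trans (q : Q1 * {set Q2}) (a : X) : Q1 * {set Q2} :=
  let q1 := dfa_trans q.1 a in
  (q1, [set dfa_trans q2 a | q2 in q.2] :|: cat_restart q1).

Definition cat_start : Q1 * {set Q2} := (dfa_start M1, cat_restart (dfa_start M1)).

(* A copy of M2 is started whenever M1 accepts the prefix read so far. *)
Definition cat_dfa : dfa X :=
  @DFA X (Q1 * {set Q2})%type cat_start
    [set q : Q1 * {set Q2} | [exists q2 in q.2, q2 \in dfa_final M2]] cat_trans.

Lemma cat_dfa_run w :
  (foldl cat_trans cat_start w).1 = foldl (@dfa_trans X M1) (dfa_start M1) w /\
  forall q2, q2 \in (foldl cat_trans cat_start w).2 <->
    exists u v, w = u ++ v /\ dfa_accept M1 u /\ q2 = run2 v.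
Proof.
elim/last_ind: w => [|w a [IH1 IH2]].
  split=> // q2; rewrite mem_cat_restart; split.
    by case/andP=> acc /eqP ->; exists [::], [::].
  case=> u [v [uv [acc ->]]].
  have /andP[/nilP u0 /nilP v0] : nilp u && nilp v by rewrite -cat_nilp -uv.
  by move: acc; rewrite u0 v0 /dfa_accept eqxx andbT.
rewrite !foldl_rcons /= IH1; split=> // q2; rewrite inE mem_cat_restart; split.
  case/orP=> [/imsetP[q2' /IH2[u [v [-> [acc ->]]]] ->]|/andP[acc /eqP->]].
    by exists u, (rcons v a); rewrite rcons_cat foldl_rcons.
  by exists (rcons w a), [::]; rewrite cats0 /dfa_accept foldl_rcons.
case=> u [v [+ [acc ->]]]; case/lastP: v => [|v b].
  rewrite cats0 => wau; move: acc; rewrite -wau /dfa_accept foldl_rcons => -> /=.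
  by rewrite eqxx orbT.
rewrite -rcons_cat => /rcons_inj[wuv <-].
rewrite foldl_rcons (imset_f (fun q => dfa_trans q a)) //.
by apply/IH2; exists u, v.
Qed.

Lemma cat_dfa_accept w :
  dfa_accept cat_dfa w <->
  exists u v, w = u ++ v /\ dfa_accept M1 u /\ dfa_accept M2 v.
Proof.
have [_ run_cat] := cat_dfa_run w.
rewrite /dfa_accept inE /=; split.
  by case/exists_inP=> q2 /run_cat[u [v [-> [acc ->]]]]; exists u, v.
case=> u [v [wuv [acc1 acc2]]]; apply/exists_inP; exists (run2 v) => //.
by apply/run_cat; exists u, v.
Qed.
End Concatenation.

Lemma regular_cat L1 L2 : regular L1 -> regular L2 ->
  regular (fun w => exists u v, w = u ++ v /\ L1 u /\ L2 v).
Proof.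
move=> [M1 LM1] [M2 LM2]; exists (cat_dfa M1 M2) => w.
apply: iff_trans (iff_sym (cat_dfa_accept M1 M2 w)).
split=> -[u [v [-> [/LM1 h1 /LM2 h2]]]]; by exists u, v.
Qed.

Section Shift.
Variables (Y : finType) (h : X -> X -> Y) (z : X).

(* The state remembers the previous letter b, so that h b a is fed to M one step
   late; the last letter is paired with z on acceptance. *)
Definition shift_trans (M : dfa Y) (q : dfa_state M * option X) (a : X) :=
  (oapp (fun b => dfa_trans q.1 (h b a)) q.1 q.2, Some a).

Definition shift_dfa (M : dfa Y) : dfa X :=
  @DFA X (dfa_state M * option X)%type (dfa_start M, None)
    [set q | oapp (fun b => dfa_trans q.1 (h b z)) q.1 q.2 \in dfa_final M]
    (@shift_trans M).

Lemma shift_dfa_accept (M : dfa Y) w :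
  dfa_accept (shift_dfa M) w = dfa_accept M (shift_pairs h z w).
Proof.
have run_shift q b w' : foldl (@shift_trans M) (q, Some b) w' =
    (foldl (@dfa_trans Y M) q (pairmap h b w'), Some (last b w')).
  by elim: w' q b => //= a w' IHw q b; rewrite IHw.
rewrite /dfa_accept inE; case: w => [|a w] //=.
by rewrite run_shift -cats1 pairmap_cat foldl_cat.
Qed.

Lemma regular_shift (L : seq Y -> Prop) :
  regular L -> regular (fun w => L (shift_pairs h z w)).
Proof. by move=> [M LM]; exists (shift_dfa M) => w; rewrite shift_dfa_accept. Qed.
End Shift.
End RegularClosure.

Section Convolution.
Variable T : Type.
Implicit Types (s t : seq T) (p : option T * option T).

Lemma conv2_cons a b s t : conv2 (a :: s) (b :: t) = (Some a, Some b) :: conv2 s t.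
Proof.
rewrite /conv2 (maxnSS (size s) (size t)) -add1n iotaD map_cat (iotaDl 1 0) -map_comp.
by congr cons.
Qed.

Lemma conv2_cons_nil a s : conv2 (a :: s) [::] = (Some a, None) :: conv2 s [::].
Proof.
rewrite /conv2 (maxn0 (size s).+1) maxn0 -add1n iotaD map_cat (iotaDl 1 0) -map_comp.
by congr cons; apply: eq_map => i; rewrite /= !nth_nil.
Qed.

Lemma conv2_nil_cons b t : conv2 [::] (b :: t) = (None, Some b) :: conv2 [::] t.
Proof.
rewrite /conv2 (max0n (size t).+1) max0n -add1n iotaD map_cat (iotaDl 1 0) -map_comp.
by congr cons; apply: eq_map => i; rewrite /= !nth_nil.
Qed.

Definition conv2E := (conv2_cons, conv2_cons_nil, conv2_nil_cons).

Definition swap p := (p.2, p.1).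

Lemma swapK : involutive swap.
Proof. by case. Qed.

Lemma map_swap_conv2 s t : map swap (conv2 s t) = conv2 t s.
Proof. by rewrite /conv2 -map_comp maxnC. Qed.

Lemma conv2_cat s1 s2 t1 t2 : size s1 = size t1 ->
  conv2 (s1 ++ s2) (t1 ++ t2) = conv2 s1 t1 ++ conv2 s2 t2.
Proof.
by elim: s1 t1 => [|a s1 IHs] [|b t1] // [/IHs st]; rewrite !cat_cons !conv2E st.
Qed.

Lemma pmap_fst_conv2 s t : pmap fst (conv2 s t) = s.
Proof.
elim: s t => [|a s IHs] t; first by elim: t => [|b t IHt] //; rewrite conv2E.
by case: t => [|b t]; rewrite conv2E /= IHs.
Qed.

Lemma pmap_snd_conv2 s t : pmap snd (conv2 s t) = t.
Proof.
rewrite -(map_swap_conv2 t s) -[RHS](pmap_fst_conv2 t s).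
by elim: (conv2 t s) => //= p u ->.
Qed.

Definition both_some p := p.1 && p.2.
Definition fst_only p := p.1 && ~~ p.2.
Definition snd_only p := ~~ p.1 && p.2.

Lemma all_both_some_conv2P u :
  all both_some u <-> exists s t, size s = size t /\ u = conv2 s t.
Proof.
split.
  elim: u => [|[[a|] [b|]] u IHu] //=; first by exists [::], [::].
  case/IHu=> s [t [st ->]]; exists (a :: s), (b :: t).
  by rewrite conv2E -[size _]/(size s).+1 st.
case=> s [t [+ ->]]; elim: s t => [|a s IHs] [|b t] // [/IHs].
by rewrite conv2E.
Qed.

Lemma all_fst_only_conv2P u : all fst_only u <-> exists s, u = conv2 s [::].
Proof.
split.
  elim: u => [|[[a|] [b|]] u IHu] //=; first by exists [::].
  by case/IHu=> s ->; exists (a :: s); rewrite conv2E.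
by case=> s ->; elim: s => [|a s IHs] //; rewrite conv2E /= IHs.
Qed.

Lemma all_snd_only_conv2P u : all snd_only u <-> exists t, u = conv2 [::] t.
Proof.
split.
  elim: u => [|[[a|] [b|]] u IHu] //=; first by exists [::].
  by case/IHu=> t ->; exists (b :: t); rewrite conv2E.
by case=> t ->; elim: t => [|b t IHt] //; rewrite conv2E /= IHt.
Qed.

Lemma conv2P u : (exists s t, u = conv2 s t) <->
  exists u1 u2, u = u1 ++ u2 /\ all both_some u1 /\ (all fst_only u2 \/ all snd_only u2).
Proof.
split.
  case=> s [t ->]; elim: s t => [|a s IHs] t.
    exists [::], (conv2 [::] t); do 2!split=> //.
    by right; apply/all_snd_only_conv2P; exists t.
  case: t => [|b t].
    exists [::], (conv2 (a :: s) [::]); do 2!split=> //.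
    by left; apply/all_fst_only_conv2P; exists (a :: s).
  rewrite conv2E; have [u1 [u2 [-> [all1 all2]]]] := IHs t.
  by exists ((Some a, Some b) :: u1), u2.
case=> u1 [u2 [-> [/all_both_some_conv2P[s [t [st ->]]]]]].
case=> [/all_fst_only_conv2P[s2 ->]|/all_snd_only_conv2P[t2 ->]].
  by exists (s ++ s2), (t ++ [::]); rewrite conv2_cat.
by exists (s ++ [::]), (t ++ t2); rewrite conv2_cat.
Qed.

Lemma conv2_inj s1 t1 s2 t2 : conv2 s1 t1 = conv2 s2 t2 -> s1 = s2 /\ t1 = t2.
Proof.
move=> E; have := congr1 (pmap fst) E; have := congr1 (pmap snd) E.
by rewrite !pmap_fst_conv2 !pmap_snd_conv2.
Qed.

Lemma conv_same_length_conv2 (A : seq T -> Prop) s t :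
  conv_same_length A (conv2 s t) <-> A s /\ A t /\ size s = size t.
Proof.
split; last by case=> As [At st]; exists s, t.
by case=> a1 [a2 [A1 [A2 [st /conv2_inj[-> ->]]]]].
Qed.

Lemma conv_same_lengthE (A : seq T -> Prop) u :
  conv_same_length A u <-> all both_some u /\ A (pmap fst u) /\ A (pmap snd u).
Proof.
split=> [[a1 [a2 [A1 [A2 [st ->]]]]]|[/all_both_some_conv2P[s [t [st ->]]]]].
  rewrite pmap_fst_conv2 pmap_snd_conv2; split=> //.
  by apply/all_both_some_conv2P; exists a1, a2.
by rewrite pmap_fst_conv2 pmap_snd_conv2 => -[As At]; exists s, t.
Qed.
End Convolution.

Arguments swap {T} p.
Arguments both_some {T} p.
Arguments fst_only {T} p.
Arguments snd_only {T} p.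

Section ShiftSnd.
Variable T : eqType.
Local Notation letter := (option T * option T)%type.
Local Notation pad := ((None, None) : letter).

Definition next_snd (p q : letter) : letter := (p.1, q.2).

(* Pairing each first component with the second component of the next letter
   shifts the second track one step left.  The last first component gets paired
   with padding; the result is the letter (None, None), which is erased, unless
   the first track is the longer one. *)
Definition shift_snd (v : seq letter) : seq letter :=
  filter (predC1 pad) (shift_pairs next_snd pad v).

Lemma shift_conv2_nil d (t : seq T) :
  filter (predC1 pad) (pairmap next_snd (None, d) (rcons (conv2 [::] t) pad)) =
  conv2 [::] t.
Proof. by elim: t d => [|b t IHt] d //; rewrite conv2E /= IHt. Qed.

Lemma shift_conv2_cons d a (s t : seq T) :
  filter (predC1 pad) (pairmap next_snd (Some a, d) (rcons (conv2 s t) pad)) =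
  conv2 (a :: s) t.
Proof.
elim: s t a d => [|a' s IHs] [|b t] a d; rewrite ?conv2E //=; congr cons.
- exact: shift_conv2_nil.
- by rewrite -conv2_cons_nil; apply: IHs.
- exact: IHs.
Qed.

Lemma shift_snd_conv2 x (s t : seq T) : shift_snd (conv2 s (x :: t)) = conv2 s t.
Proof.
case: s => [|a s]; rewrite conv2E /shift_snd /=.
  exact: shift_conv2_nil.
exact: shift_conv2_cons.
Qed.
End ShiftSnd.

Arguments next_snd {T} p q.

Section Insertion.
Variables (Sigma : finType) (Lambda : {set Sigma}).
Local Notation letter := (option Sigma * option Sigma)%type.
Implicit Types (A : seq Sigma -> Prop) (C : seq letter -> Prop) (v : seq letter).

Lemma regular_conv2 : regular (fun v : seq letter => exists s t, v = conv2 s t).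
Proof.
apply: eq_regular (regular_cat (regular_all both_some)
  (regular_or (regular_all fst_only) (regular_all snd_only))) => v.
exact: iff_sym (conv2P v).
Qed.

Lemma regular_conv_same_length A : regular A -> regular (conv_same_length A).
Proof.
move=> regA; apply: eq_regular (regular_and (regular_all both_some)
  (regular_and (regular_pmap fst regA) (regular_pmap snd regA))) => u.
exact: iff_sym (conv_same_lengthE A u).
Qed.

Definition conv_cons_snd C v :=
  exists x b1 b2, x \in Lambda /\ C (conv2 b1 b2) /\ v = conv2 b1 (x :: b2).

Definition conv_cons_fst C v :=
  exists y b1 b2, y \in Lambda /\ C (conv2 b1 b2) /\ v = conv2 (y :: b1) b2.

Definition snd_in_Lambda (p : letter) := oapp (mem Lambda) false p.2.

Lemma conv_cons_sndE C v : conv_cons_snd C v <->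
  ((exists s t, v = conv2 s t) /\ oapp snd_in_Lambda false (ohead v)) /\
  C (shift_snd v).
Proof.
split=> [[x [b1 [b2 [xL [Cb ->]]]]]|[[[s [t ->]] hd] Cv]].
  rewrite shift_snd_conv2; do 2!split=> //; first by exists b1, (x :: b2).
  by case: b1 {Cb} => [|a b1]; rewrite conv2E.
case: t hd Cv => [|x t] hd Cv; first by case: s hd {Cv} => [|a s]; rewrite ?conv2E.
rewrite shift_snd_conv2 in Cv; exists x, s, t; split=> //.
by case: s hd {Cv} => [|a s]; rewrite conv2E.
Qed.

Lemma regular_conv_cons_snd C : regular C -> regular (conv_cons_snd C).
Proof.
move=> regC.
have reg_shift := regular_shift next_snd (None, None)
  (regular_filter (predC1 (None, None)) regC).
apply: eq_regular (regular_and (regular_and regular_conv2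
  (regular_ohead snd_in_Lambda)) reg_shift) => v.
exact: iff_sym (conv_cons_sndE C v).
Qed.

Lemma conv_cons_fst_swap C v :
  conv_cons_fst C v <-> conv_cons_snd (fun u => C (map swap u)) (map swap v).
Proof.
split=> [[y [b1 [b2 [yL [Cb ->]]]]]|[x [b1 [b2 [xL [Cb vE]]]]]].
  by exists y, b2, b1; rewrite !map_swap_conv2.
exists x, b2, b1; rewrite map_swap_conv2 in Cb; split=> //; split=> //.
by rewrite -[v](mapK (@swapK _)) vE map_swap_conv2.
Qed.

Lemma regular_conv_cons_fst C : regular C -> regular (conv_cons_fst C).
Proof.
move=> regC.
apply: eq_regular (regular_map swap (regular_conv_cons_snd (regular_map swap regC))) => v.
exact: iff_sym (conv_cons_fst_swap C v).
Qed.

Lemma conv_insert_cat A C w :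
  (exists a1 a2 b1 b2, conv_same_length A (conv2 a1 a2) /\ C (conv2 b1 b2) /\
     ((exists x, x \in Lambda /\ w = conv2 (a1 ++ b1) (a2 ++ x :: b2)) \/
      (exists y, y \in Lambda /\ w = conv2 (a1 ++ y :: b1) (a2 ++ b2)))) <->
  exists u v, w = u ++ v /\ conv_same_length A u /\
    (conv_cons_snd C v \/ conv_cons_fst C v).
Proof.
split=> [[a1 [a2 [b1 [b2 [Aa [Cb ins]]]]]]|[u [v [-> [Au ins]]]]].
  have [_ [_ st]] := iffLR (conv_same_length_conv2 A a1 a2) Aa.
  case: ins => [[x [xL ->]]|[y [yL ->]]]; rewrite conv2_cat //.
    exists (conv2 a1 a2), (conv2 b1 (x :: b2)); do 2!split=> //.
    by left; exists x, b1, b2.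
  exists (conv2 a1 a2), (conv2 (y :: b1) b2); do 2!split=> //.
  by right; exists y, b1, b2.
have [a1 [a2 [_ [_ [st uE]]]]] := Au; rewrite uE in Au.
case: ins => [[x [b1 [b2 [xL [Cb ->]]]]]|[y [b1 [b2 [yL [Cb ->]]]]]].
  by exists a1, a2, b1, b2; do 2!split=> //; left; exists x; rewrite uE conv2_cat.
by exists a1, a2, b1, b2; do 2!split=> //; right; exists y; rewrite uE conv2_cat.
Qed.
End Insertion.

Theorem lemma3p5 (Sigma : finType) (A B : seq Sigma -> Prop)
  (B' : seq (option Sigma * option Sigma) -> Prop) (Lambda : {set Sigma}) :
  regular A -> regular B -> regular B' ->
  (forall w, B' w -> exists b1 b2, B b1 /\ B b2 /\ w = conv2 b1 b2) ->
  regular (fun w =>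
    exists a1 a2 b1 b2,
      conv_same_length A (conv2 a1 a2) /\ B' (conv2 b1 b2) /\
      ((exists x, x \in Lambda /\ w = conv2 (a1 ++ b1) (a2 ++ x :: b2)) \/
       (exists y, y \in Lambda /\ w = conv2 (a1 ++ y :: b1) (a2 ++ b2)))).
Proof.
move=> regA _ regB' _.
apply: eq_regular (regular_cat (regular_conv_same_length regA)
  (regular_or (regular_conv_cons_snd Lambda regB')
              (regular_conv_cons_fst Lambda regB'))) => w.
exact: iff_sym (conv_insert_cat Lambda A B' w).
Qed.
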